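(* Let $n\ge2$, let $q\in\mathbb C$ with $0<|q|<1$ and fix an $n$-th root $q^{1/n}$. Let $A^*$ be the $(n-1)\times(n-1)$ matrix $A^*_{\alpha\beta}=n\delta_{\alpha\beta}-1$. For nonzero complex $\mu_1,\dots,\mu_{n-1}$ set $\mu_n:=q^{-1}(\mu_1\cdots\mu_{n-1})^{-1}$ and $$\Theta^{(1)}(\mu)=\sum_{\vec k\in\mathbb Z^{n-1}}q^{\frac1n\{(\vec k,A^*\vec k)+(\vec 1,\vec k)\}}\mu_1^{k_1}\cdots\mu_{n-1}^{k_{n-1}},$$ where $(\vec k,A^*\vec k)=\sum_{\alpha,\beta}k_\alpha A^*_{\alpha\beta}k_\beta$ and $(\vec1,\vec k)=\sum_\alpha k_\alpha$, and $q^{m/n}:=(q^{1/n})^m$. Then the series converges, and for every $\alpha=1,\dots,n$, $$q\mu_\alpha\,\Theta^{(1)}\bigl(\nabla^\alpha(\mu)\bigr)=\Theta^{(1)}(\mu),$$ where $\nabla^\alpha(\mu_\beta)=q^{2(\delta_{\alpha\beta}-1/n)}\mu_\beta$ for $\beta=1,\dots,n$ (this shift preserves $\prod_\beta\mu_\beta=q^{-1}$). With $q=e^{2\pi i\tau}$, $q^{1/n}\mu_\alpha=e^{2\pi iz_\alpha}$ and $\Omega_{\alpha\beta}=2\tau(\delta_{\alpha\beta}-\frac1n)$, one has $\Theta^{(1)}=\sum_{\vec k\in\mathbb Z^{n-1}}\exp\{\pi i(\vec k,\Omega\vec k)+2\pi i(\vec k,\vec z)\}$, a Riemann theta function.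
   Context: This function is the candidate evolution operator for the $q$-deformed isotropic top on the $SL_q(n)$ Heisenberg double, whose evolution equations are the displayed functional equations in the spectral variables $\mu_1,\dots,\mu_n$ subject to $\prod_{\alpha=1}^n\mu_\alpha=q^{-1}$. *)

From mathcomp Require Import all_boot all_order all_algebra.
From mathcomp Require Import complex.
From mathcomp Require Import all_classical all_reals all_analysis.
From mathcomp Require Import Rstruct Rstruct_topology.
Import Order.TTheory GRing.Theory Num.Theory numFieldNormedType.Exports.

Set Implicit Arguments.
Unset Strict Implicit.
Unset Printing Implicit Defensive.

Local Open Scope classical_set_scope.
Local Open Scope ring_scope.

(* The complex numbers, as the numClosedFieldType R[i] over Stdlib's reals,
   equipped (via numFieldNormedType.Exports) with its norm topology. *)
Definition C : numClosedFieldType := Rdefinitions.R[i].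

Definition quadA (n : nat) (k : 'I_n.-1 -> int) : int :=
  \sum_(a < n.-1) \sum_(b < n.-1) k a * ((n * (a == b))%:Z - 1) * k b.

(* The general term  q^{((k,A^*k)+(1,k))/n} mu_1^{k_1} ... mu_{n-1}^{k_{n-1}},
   with q^{m/n} := qn ^ m  (qn a fixed n-th root of q). *)
Definition theta_term (n : nat) (qn : C) (mu : 'I_n.-1 -> C)
    (k : 'I_n.-1 -> int) : C :=
  qn ^ (quadA k + \sum_(a < n.-1) k a) * \prod_(a < n.-1) mu a ^ k a.

Definition theta_abs_summable (n : nat) (qn : C) (mu : 'I_n.-1 -> C) : Prop :=
  exists M : C, forall s : seq {ffun 'I_n.-1 -> int}, uniq s ->
    \sum_(k <- s) `|theta_term qn mu k| <= M.

(* Partial sum over the box { k : |k_a| <= N for all a }. *)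
Definition theta_box_sum (n : nat) (qn : C) (mu : 'I_n.-1 -> C) (N : nat) : C :=
  \sum_(j : {ffun 'I_n.-1 -> 'I_(2 * N + 1)})
     theta_term qn mu (fun a => (j a)%:Z - N%:Z).

Definition Theta1 (n : nat) (qn : C) (mu : 'I_n.-1 -> C) : C :=
  limn (theta_box_sum qn mu).

(* mu_alpha for alpha = 1..n (0-indexed), with mu_n := q^{-1} (mu_1...mu_{n-1})^{-1}. *)
Definition mu_full (n : nat) (q : C) (mu : 'I_n.-1 -> C) (alpha : 'I_n) : C :=
  if insub (val alpha) is Some a then mu (a : 'I_n.-1)
  else (q * \prod_(a < n.-1) mu a)^-1.

(* nabla^alpha on the free coordinates mu_1..mu_{n-1}:
   mu_b |-> q^{2(delta_{alpha b} - 1/n)} mu_b = qn^(2 n delta_{alpha b} - 2) mu_b. *)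
Definition nabla (n : nat) (qn : C) (alpha : 'I_n) (mu : 'I_n.-1 -> C)
    (b : 'I_n.-1) : C :=
  qn ^ ((2 * n * (val alpha == val b))%:Z - 2) * mu b.

(* The exponent of the [k]-th term is [(k, A^* k) + (1, k)], which dominates
   [sum_a (k_a^2 + k_a)] because [(sum_a k_a)^2 <= (n-1) sum_a k_a^2]; hence the
   term is bounded by a product of one-dimensional terms
   [|q^(1/n)|^(j^2 + j) |mu_a|^j], which decay geometrically, and the series is
   absolutely summable.  Replacing [mu] by [nabla^alpha mu] multiplies the
   [k]-th term by [q^(2 k_alpha - 2 (1, k) / n)] (with [k_n = 0]); together
   with the factor [q mu_alpha] this is the [k + e_alpha]-th term for
   [alpha < n], and, since [mu_n = q^-1 (mu_1 ... mu_(n-1))^-1], the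
   [k - (1, ..., 1)]-th term for [alpha = n].  Box partial sums of an absolutely
   summable family have the same limit after a translation of the index, which
   gives the functional equation. *)

From mathcomp Require Import all_boot all_order all_algebra.
From mathcomp Require Import complex.
From mathcomp Require Import all_classical all_reals all_analysis.
From mathcomp Require Import Rstruct Rstruct_topology.
From Stdlib Require Import Lia.
From mathcomp Require Import zify ring lra.
Import Order.TTheory GRing.Theory Num.Theory numFieldNormedType.Exports.

Set Implicit Arguments.
Unset Strict Implicit.
Unset Printing Implicit Defensive.

Local Open Scope classical_set_scope.
Local Open Scope complex_scope.
Local Open Scope ring_scope.

(* [R[i]] packed as a [numClosedFieldType], so that it carries its norm
   topology; [C] is [complexN Rdefinitions.R]. *)
Definition complexN (R : rcfType) : numClosedFieldType := R[i].

Section ComplexEmbedding.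
Variable R : realType.

Lemma normc_real (x : R) : `|x%:C| = `|x|%:C :> complexN R.
Proof. by rewrite normc_def /= expr0n addr0 sqrtr_sqr. Qed.

Lemma gtc0_real (e : complexN R) : 0 < e -> exists2 r : R, 0 < r & e = r%:C.
Proof. by case: e => a b; rewrite ltcE /= => /andP[/eqP -> a0]; exists a. Qed.

Lemma cvgn_complex_real (v : nat -> R) (a : R) :
  v @ \oo --> a -> (fun N => (v N)%:C : complexN R) @ \oo --> (a%:C : complexN R).
Proof.
move/cvgrPdist_le => va; apply/cvgrPdist_le => _ /gtc0_real[e e0 ->].
by apply: filterS (va e e0) => N; rewrite -rmorphB normc_real lecR.
Qed.

Lemma cauchy_cvgn_real (v : nat -> R) :
  (forall e : R, 0 < e -> exists N0, forall N, (N0 <= N)%N -> `|v N - v N0| <= e) ->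
  cvgn v.
Proof.
move=> vC; apply: (@cauchy_cvg _ (v @ \oo)); apply: cauchy_exP => e e0.
have [|N0 vN0] := vC (e / 2); first lra.
exists (v N0), N0 => // N /= N0N; rewrite /ball /= distrC.
by have := vN0 N N0N; lra.
Qed.

End ComplexEmbedding.

Lemma prodfXz (F : fieldType) (I : finType) (x : F) (z : I -> int) :
  x != 0 -> \prod_i x ^ z i = x ^ (\sum_i z i).
Proof.
move=> x0; apply: (big_rec2 (fun a b => a = x ^ b)); first by rewrite expr0z.
by move=> i a b _ ->; rewrite expfzDr.
Qed.

Lemma normrXz (F : numFieldType) (x : F) (z : int) : `|x ^ z| = `|x| ^ z.
Proof. by case: z => t; rewrite ?NegzE -?exprnN ?normfV normrX. Qed.

Lemma ler_wiXz2l (F : numFieldType) (r : F) (x y : int) :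
  0 < r -> r <= 1 -> y <= x -> r ^ x <= r ^ y.
Proof.
move=> r0 r1 yx; have [d ->] : exists d : nat, x = y + d%:Z.
  by exists (absz (x - y)); rewrite gez0_abs ?subr_ge0 // addrCA subrr addr0.
rewrite expfzDr ?gt_eqF //; apply: ler_piMr; first exact: exprz_ge0 (ltW r0).
exact: exprn_ile1 (ltW r0) r1.
Qed.

Lemma sqr_sum_le (F : realDomainType) (I : finType) (k : I -> F) :
  (\sum_a k a) ^+ 2 <= #|I|%:R * \sum_a k a ^+ 2.
Proof.
have : 0 <= \sum_a \sum_b (k a - k b) ^+ 2.
  by apply: sumr_ge0 => a _; apply: sumr_ge0 => b _; exact: sqr_ge0.
suff -> : \sum_a \sum_b (k a - k b) ^+ 2 =
    2 * (#|I|%:R * \sum_a k a ^+ 2 - (\sum_a k a) ^+ 2) by rewrite pmulr_rge0 ?subr_ge0.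
transitivity (\sum_a (#|I|%:R * k a ^+ 2 + \sum_b k b ^+ 2 - 2 * k a * \sum_b k b)).
  apply: eq_bigr => a _.
  rewrite (eq_bigr (fun b => (k a ^+ 2 + k b ^+ 2) - 2 * k a * k b)) => [|b _]; last by ring.
  by rewrite sumrB big_split /= sumr_const mulr_sumr !mulr_natl !cardE.
rewrite sumrB big_split /= sumr_const -mulr_sumr -mulr_suml -mulr_sumr -mulr_natl; ring.
Qed.

Lemma uniq_sub_ler_sum (F : numDomainType) (T : eqType) (s t : seq T) (G : T -> F) :
  uniq s -> uniq t -> {subset s <= t} -> (forall x, 0 <= G x) ->
  \sum_(x <- s) G x <= \sum_(x <- t) G x.
Proof.
move=> s_uniq t_uniq st G0; rewrite [X in _ <= X](bigID (mem s)) /=.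
have -> : \sum_(x <- t | x \in s) G x = \sum_(x <- s) G x.
  rewrite -big_filter; apply: perm_big; apply: uniq_perm; [exact: filter_uniq | by [] |].
  by move=> x; rewrite mem_filter andb_idr //; exact: st.
by rewrite lerDl sumr_ge0.
Qed.

Section GaussianSums.
Variable R : realType.

Lemma geometric_half_sum L : \sum_(i < L) (2^-1 : R) ^+ i <= 2.
Proof.
suff -> : \sum_(i < L) (2^-1 : R) ^+ i = 2 - 2 * 2^-1 ^+ L.
  by rewrite lerBlDr lerDl mulr_ge0 // exprn_ge0.
elim: L => [|L IH]; first by rewrite big_ord0 expr0 mulr1 subrr.
by rewrite big_ord_recr /= IH exprS; field.
Qed.

Lemma sum_box1_half N :
  \sum_(i < 2 * N + 1) (2^-1 : R) ^+ `|(i%:Z - N%:Z)%R| <= 4.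
Proof.
set x := (2^-1 : R).
have x0 : 0 <= x by rewrite /x invr_ge0.
have x1 : x <= 1 by rewrite /x invf_le1 //; lra.
rewrite -(big_mkord xpredT (fun i => x ^+ `|(i%:Z - N%:Z)%R|)).
rewrite (@big_cat_nat _ _ _ N) //=; last by lia.
have -> : (4 : R) = 2 + 2 by lra.
apply: lerD.
  rewrite big_nat_rev /= add0n.
  apply: le_trans (geometric_half_sum N); rewrite -(big_mkord xpredT (fun i => x ^+ i)).
  rewrite big_nat_cond [X in _ <= X]big_nat_cond.
  apply: ler_sum => i /andP[/andP[_ iN] _].
  by apply: ler_wiXn2l => //; lia.
rewrite -{1}(add0n N) big_addn.
apply: le_trans (geometric_half_sum (2 * N + 1 - N)).
rewrite -(big_mkord xpredT (fun i => x ^+ i)).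
by apply: ler_sum => i _; rewrite [X in x ^+ X](_ : _ = i) //; lia.
Qed.

Lemma gauss_geometric_bounded (r x : R) : 0 < r < 1 -> 1 <= x ->
  exists c : R, forall t : nat, r ^+ (t * t - t) * x ^+ t <= c.
Proof.
move=> /andP[r0 r1] x1; have x0 : 0 < x by apply: lt_le_trans ltr01 x1.
have [T rTx] : exists T : nat, r ^+ T * x <= 1.
  have : `|r| < 1 by rewrite ger0_norm ?ltW.
  move/cvg_expr/cvgr0Pnorm_lt/(_ x^-1); rewrite invr_gt0 => /(_ x0)[T _ rT].
  exists T; rewrite -ler_pdivlMr // mul1r; apply: ltW.
  by have := rT T (leqnn T); rewrite /= ger0_norm // exprn_ge0 // ltW.
exists (x ^+ T) => t; have [tT | Tt] := leqP t T.
  rewrite -[X in _ <= X]mul1r; apply: ler_pM.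
  - exact: exprn_ge0 (ltW r0).
  - exact: exprn_ge0 (ltW x0).
  - exact: exprn_ile1 (ltW r0) (ltW r1).
  - exact: ler_weXn2l.
rewrite (_ : (t * t - t = t.-1 * t)%N); last by case: t Tt => // t _; rewrite mulSn; lia.
rewrite exprM -exprMn; apply: (@le_trans _ _ 1); last exact: exprn_ege1.
apply: exprn_ile1; first by rewrite mulr_ge0 ?exprn_ge0 ?ltW.
apply: le_trans rTx; apply: ler_wpM2r; first exact: ltW.
by apply: ler_wiXn2l; rewrite ?ltW //; lia.
Qed.

Lemma gauss_term_decay (r rho : R) : 0 < r < 1 -> 0 < rho ->
  exists c : R, forall j : int, r ^ (j ^+ 2 + j) * rho ^ j <= c * 2^-1 ^+ `|j|.
Proof.
move=> r01 rho0; have /andP[r0 r1] := r01.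
set P := rho + rho^-1 + 1.
have rhoV0 : 0 < rho^-1 by rewrite invr_gt0.
have [|c rPc] := gauss_geometric_bounded r01 (_ : 1 <= 2 * P); first by rewrite /P; lra.
exists c => j.
have rj : r ^ (j ^+ 2 + j) <= r ^+ (`|j| * `|j| - `|j|)%N.
  rewrite [r ^+ _]exprnP; apply: (ler_wiXz2l r0 (ltW r1)).
  by case: j => t; rewrite expr2 /= ?NegzE; lia.
have rhoP : rho ^ j <= P ^+ `|j|.
  case: j {rj} => t /=; first by apply: lerXn2r; rewrite ?nnegrE ?ltW // /P; lra.
  rewrite -[_ ^ _]/((rho ^+ t.+1)^-1) -exprVn.
  by apply: lerXn2r; rewrite ?nnegrE ?ltW // /P; lra.
apply: le_trans (ler_pM (exprz_ge0 _ (ltW r0)) (exprz_ge0 _ (ltW rho0)) rj rhoP) _.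
rewrite (_ : P ^+ _ = (2 * P) ^+ `|j| * 2^-1 ^+ `|j|); last first.
  by rewrite -exprMn; congr (_ ^+ _); field.
by rewrite mulrA ler_wpM2r ?exprn_ge0 ?invr_ge0.
Qed.

Lemma gauss_box1_sum_bounded (r rho : R) : 0 < r < 1 -> 0 < rho -> exists B : R,
  forall N : nat, \sum_(i < 2 * N + 1)
    r ^ ((i%:Z - N%:Z) ^+ 2 + (i%:Z - N%:Z)) * rho ^ (i%:Z - N%:Z) <= B.
Proof.
move=> r01 rho0; have [c decay] := gauss_term_decay r01 rho0.
have c0 : 0 <= c.
  have /andP[r0 _] := r01.
  rewrite -[c]mulr1 -(expr0 (2^-1 : R)); apply: le_trans (decay 0).
  by rewrite mulr_ge0 ?exprz_ge0 ?ltW.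
exists (c * 4) => N; apply: le_trans (ler_sum _ (fun i _ => decay _)) _.
by rewrite -mulr_sumr ler_wpM2l // sum_box1_half.
Qed.

End GaussianSums.

Local Notation R := Rdefinitions.R.

Lemma normc_ge_Im (x : C) : `|complex.Im x|%:C <= `|x|.
Proof.
case: x => a b; rewrite normc_def lecR /= -sqrtr_sqr.
by apply: ler_wsqrtr; rewrite lerDr sqr_ge0.
Qed.

Lemma cauchy_cvgn_complex (u : nat -> C) :
  (forall e : R, 0 < e -> exists N0, forall N, (N0 <= N)%N -> `|u N - u N0| <= e%:C) ->
  cvgn u.
Proof.
move=> uC.
have cvgn_part (p : C -> R) : (forall x y, p (x - y) = p x - p y) ->
    (forall x, `|p x|%:C <= `|x|) -> cvgn (p \o u).
  move=> pB pn; apply: cauchy_cvgn_real => e /uC[N0 uN0]; exists N0 => N N0N.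
  by rewrite /= -pB -lecR; apply: le_trans (pn _) (uN0 N N0N).
have /cvgn_part/(_ (@normc_ge_Re _))/cvgn_complex_real cvg_Re :
    {morph @complex.Re R : x y / x - y} by case=> ? ? [].
have /cvgn_part/(_ normc_ge_Im)/cvgn_complex_real cvg_Im :
    {morph @complex.Im R : x y / x - y} by case=> ? ? [].
rewrite (funext (fun N => complexE (u N))); apply: cvgP.
by apply: cvgD cvg_Re _; apply: cvgM cvg_Im; exact: cvg_cst.
Qed.

Section BoxSums.
Variable m : nat.
Local Notation K := {ffun 'I_m -> int}.

Definition in_box (N : nat) (k : K) : bool := [forall a, `|k a| <= N]%N.

Definition box_point (N : nat) (j : {ffun 'I_m -> 'I_(2 * N + 1)}) : K :=
  [ffun a => (j a)%:Z - N%:Z].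

Definition box (N : nat) : seq K :=
  map (@box_point N) (enum {ffun 'I_m -> 'I_(2 * N + 1)}).

Definition box_sum (f : K -> C) (N : nat) : C :=
  \sum_(j : {ffun 'I_m -> 'I_(2 * N + 1)}) f (box_point j).

Definition abs_summable (f : K -> C) :=
  exists M : C, forall s : seq K, uniq s -> \sum_(k <- s) `|f k| <= M.

Lemma box_sumE (f : K -> C) N : box_sum f N = \sum_(k <- box N) f k.
Proof. by rewrite /box_sum /box big_map big_enum. Qed.

Lemma box_point_inj N : injective (@box_point N).
Proof.
move=> j1 j2 /ffunP j12; apply/ffunP => a; apply/val_inj.
by have := j12 a; rewrite !ffunE => /addIr [].
Qed.

Lemma box_uniq N : uniq (box N).
Proof. by rewrite map_inj_uniq ?enum_uniq //; exact: box_point_inj. Qed.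

Lemma in_boxW N N' k : (N <= N')%N -> in_box N k -> in_box N' k.
Proof. by move=> NN' /forallP kN; apply/forallP => a; apply: leq_trans (kN a) NN'. Qed.

Lemma mem_box N k : (k \in box N) = in_box N k.
Proof.
apply/mapP/forallP => [[j _ ->] a | kN].
  by rewrite ffunE; have := ltn_ord (j a); move: (nat_of_ord (j a)); lia.
have jP a : (absz (k a + N%:Z)%R < 2 * N + 1)%N by have := kN a; move: (k a); lia.
exists [ffun a => Ordinal (jP a)]; first by rewrite mem_enum.
by apply/ffunP => a; rewrite !ffunE /= gez0_abs; have := kN a; move: (k a); lia.
Qed.

Lemma exists_box (s : seq K) : exists N, all (in_box N) s.
Proof.
elim: s => [|k s [N sN]]; first by exists 0%N.
exists (maxn N (\max_(a < m) `|k a|)%N) => /=; apply/andP; split.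
  apply/forallP => a; rewrite leq_max; apply/orP; right.
  exact: (leq_bigmax_cond (F := fun a => `|k a|%N)).
by apply/allP => x /(allP sN); apply: in_boxW; rewrite leq_maxl.
Qed.

Lemma box_prod_sum (S : comPzSemiRingType) N (F : 'I_m -> int -> S) :
  \sum_(k <- box N) \prod_a F a (k a) =
  \prod_a \sum_(i < 2 * N + 1) F a (i%:Z - N%:Z).
Proof.
rewrite /box big_map big_enum /=.
rewrite (bigA_distr_bigA (fun a (i : 'I_(2 * N + 1)) => F a (i%:Z - N%:Z))).
by apply: eq_bigr => j _; apply: eq_bigr => a _; rewrite ffunE.
Qed.

Lemma big_box_split (f : K -> C) N s : uniq s -> {subset box N <= s} ->
  \sum_(k <- s) f k = \sum_(k <- box N) f k + \sum_(k <- s | ~~ in_box N k) f k.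
Proof.
move=> s_uniq boxNs; rewrite (bigID (in_box N)) /=; congr (_ + _).
rewrite -big_filter; apply: perm_big; apply: uniq_perm.
- exact: filter_uniq.
- exact: box_uniq.
by move=> k; rewrite mem_filter -mem_box; case kN: (k \in box N) => //=; rewrite boxNs.
Qed.

(* The finite partial sums of [|f|] have a supremum; a finite set nearly
   attaining it lies in some box, and every finite set outside that box
   contributes less than [e]. *)
Lemma abs_summable_tail (f : K -> C) : abs_summable f -> forall e : R, 0 < e ->
  exists N, forall s, uniq s -> all (predC (in_box N)) s ->
    \sum_(k <- s) `|f k| <= e%:C.
Proof.
move=> [M fM] e e0.
pose v (s : seq K) : R := \sum_(k <- s) Normc.normc (f k).
have vE s : \sum_(k <- s) `|f k| = (v s)%:C.
  by rewrite /v rmorph_sum; apply: eq_bigr.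
pose S := [set x : R | exists2 s, uniq s & x = v s].
have S_sup : has_sup S.
  split; first by exists 0, [::]; rewrite // /v big_nil.
  exists (complex.Re M) => _ [s s_uniq ->].
  by have := fM s s_uniq; rewrite vE lecE => /andP[].
have [_ [s0 s0_uniq ->] s0_near] := sup_adherent e0 S_sup.
have [N s0N] := exists_box s0.
exists N => s s_uniq sN.
have ss0_uniq : uniq (s ++ s0).
  rewrite cat_uniq s_uniq s0_uniq andbT; apply/hasPn => k /(allP s0N) kN.
  by apply/negP => /(allP sN); rewrite /= kN.
have : v (s ++ s0) <= sup S by apply: sup_upper_bound => //; exists (s ++ s0).
by rewrite vE lecR /v big_cat /= -/(v s) -/(v s0); lra.
Qed.

Lemma box_sum_approx (f : K -> C) : abs_summable f -> forall e : R, 0 < e ->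
  exists N, forall s, uniq s -> {subset box N <= s} ->
    `|\sum_(k <- s) f k - box_sum f N| <= e%:C.
Proof.
move=> f_abs e e0; have [N fN] := abs_summable_tail f_abs e0.
exists N => s s_uniq boxNs.
rewrite (big_box_split f s_uniq boxNs) -box_sumE addrC addKr.
apply: le_trans (ler_norm_sum _ _ _) _.
by rewrite -big_filter; apply: fN; [exact: filter_uniq | exact: filter_all].
Qed.

Lemma box_sum_cvg (f : K -> C) : abs_summable f -> cvgn (box_sum f).
Proof.
move=> f_abs; apply: cauchy_cvgn_complex => e /(box_sum_approx f_abs)[N fN].
exists N => N' NN'; rewrite box_sumE; apply: fN; first exact: box_uniq.
by move=> k; rewrite !mem_box; apply: in_boxW.
Qed.

Lemma in_boxB N (k v : K) : in_box N k -> in_box (N + \max_(a < m) `|v a|) (k - v).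
Proof.
move=> /forallP kN; apply/forallP => a; rewrite !ffunE.
have := kN a; have := leq_bigmax_cond (F := fun a => `|v a|%N) a isT.
by move: (\max_(b < m) _)%N (k a) (v a); lia.
Qed.

Lemma box_sum_translate (f : K -> C) (v : K) : abs_summable f ->
  box_sum (fun k => f (k + v)) @ \oo --> limn (box_sum f).
Proof.
move=> f_abs; set D := (\max_(a < m) `|v a|)%N.
suff sub_cvg0 : (fun N => box_sum (fun k => f (k + v)) N - box_sum f N) @ \oo --> 0.
  rewrite (_ : box_sum _ = (fun N => (box_sum (fun k => f (k + v)) N - box_sum f N)
                                      + box_sum f N)); last first.
    by apply: funext => N; rewrite subrK.
  by rewrite -[limn _]add0r; apply: cvgD sub_cvg0 (box_sum_cvg f_abs).
apply/cvgr0Pnorm_le => _ /gtc0_real[e e0 ->].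
have [|N0 fN0] := box_sum_approx f_abs (e := e / 2); first lra.
exists (N0 + D)%N => // N /= N0DN.
have shifted_near : `|box_sum (fun k => f (k + v)) N - box_sum f N0| <= (e / 2)%:C.
  rewrite box_sumE -(big_map (+%R^~ v) xpredT); apply: fN0.
    by rewrite map_inj_uniq ?box_uniq //; exact: addIr.
  move=> k; rewrite mem_box => kN0; rewrite -(subrK v k); apply: map_f.
  by rewrite mem_box; apply: in_boxW (in_boxB v kN0).
have near : `|box_sum f N - box_sum f N0| <= (e / 2)%:C.
  rewrite box_sumE; apply: fN0; first exact: box_uniq.
  by move=> k; rewrite !mem_box; apply: in_boxW; lia.
set g := box_sum _ N; have -> : g - box_sum f N =
    (g - box_sum f N0) - (box_sum f N - box_sum f N0) by rewrite opprB addrA subrK.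
apply: le_trans (ler_normB _ _) _; apply: le_trans (lerD shifted_near near) _.
by rewrite -rmorphD lecR; lra.
Qed.

Lemma lim_box_sum_translate (f g : K -> C) (c : C) (v : K) :
  abs_summable f -> abs_summable g -> (forall k, c * g k = f (k + v)) ->
  c * limn (box_sum g) = limn (box_sum f).
Proof.
move=> f_abs g_abs cgf.
have cg_cvg : box_sum (fun k => c * g k) @ \oo --> c * limn (box_sum g).
  rewrite (_ : box_sum _ = fun N => c * box_sum g N); last first.
    by apply: funext => N; rewrite /box_sum mulr_sumr.
  by apply: cvgM; [exact: cvg_cst | exact: box_sum_cvg].
have cf_cvg : box_sum (fun k => c * g k) @ \oo --> limn (box_sum f).
  rewrite (_ : box_sum _ = box_sum (fun k => f (k + v))); last first.
    by apply: funext => N; apply: eq_bigr => j _; rewrite cgf.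
  exact: box_sum_translate.
by rewrite -(norm_cvg_lim cg_cvg) (norm_cvg_lim cf_cvg).
Qed.

End BoxSums.

Arguments box {m}.
Arguments box_uniq {m}.


Lemma quadAE n (k : 'I_n.-1 -> int) :
  quadA k = n%:Z * \sum_a k a ^+ 2 - (\sum_a k a) ^+ 2.
Proof.
rewrite /quadA.
transitivity (\sum_(a < n.-1) (n%:Z * k a ^+ 2 - k a * \sum_b k b)).
  apply: eq_bigr => a _.
  transitivity (\sum_(b < n.-1) ((if b == a then n%:Z * k a ^+ 2 else 0) - k a * k b)).
    by apply: eq_bigr => b _; rewrite eq_sym; case: eqP => [->|_]; rewrite ?muln1 ?muln0; ring.
  by rewrite sumrB -big_mkcond big_pred1_eq mulr_sumr.
by rewrite sumrB -mulr_sumr expr2 mulr_suml.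
Qed.

Lemma quadA_ge_sum_sqr n (k : 'I_n.-1 -> int) : (0 < n)%N -> \sum_a k a ^+ 2 <= quadA k.
Proof.
move=> n0; rewrite quadAE; have := sqr_sum_le k; rewrite card_ord.
have -> : n%:Z = (n.-1)%:R + 1 by rewrite natz -[1]/(1%:Z) -PoszD addn1 prednK.
lra.
Qed.

Lemma theta_term_abs_summable n (qn : C) (mu : 'I_n.-1 -> C) :
  (0 < n)%N -> 0 < `|qn| < 1 -> (forall a, mu a != 0) -> theta_abs_summable qn mu.
Proof.
move=> n0 qn01 mu0.
set r := Normc.normc qn; pose rho a := Normc.normc (mu a).
have r01 : 0 < r < 1 by rewrite -[_ < r]ltcR -[r < _]ltcR.
have /andP[r0 r1] := r01.
have rho0 a : 0 < rho a by have := mu0 a; rewrite -normr_gt0 -[0 : C]/(0%:C) ltcR.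
pose G (k : {ffun 'I_n.-1 -> int}) := \prod_a (r ^ (k a ^+ 2 + k a) * rho a ^ k a).
have G0 k : 0 <= G k.
  by apply: prodr_ge0 => a _; rewrite mulr_ge0 ?exprz_ge0 ?ltW.
have thetaG (k : {ffun 'I_n.-1 -> int}) : `|theta_term qn mu k| <= (G k)%:C.
  have -> : `|theta_term qn mu k| = (r ^ (quadA k + \sum_a k a) * \prod_a rho a ^ k a)%:C.
    rewrite /theta_term normrM normrXz normr_prod rmorphM rmorph_prod /= fmorphXz.
    by congr (_ * _); apply: eq_bigr => a _; rewrite normrXz fmorphXz.
  rewrite lecR /G big_split /= prodfXz ?gt_eqF //.
  apply: ler_wpM2r; first by apply: prodr_ge0 => a _; rewrite exprz_ge0 ?ltW.
  by apply: (ler_wiXz2l r0 (ltW r1)); rewrite big_split lerD2r quadA_ge_sum_sqr.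
have /boolp.choice[B sumB] := fun a => gauss_box1_sum_bounded r01 (rho0 a).
exists (\prod_a B a)%:C => s s_uniq.
have [N sN] := exists_box s.
rewrite (le_trans (ler_sum _ (fun k _ => thetaG k))) // -rmorph_sum lecR.
apply: le_trans (uniq_sub_ler_sum s_uniq (box_uniq N) _ G0) _.
  by move=> k /(allP sN); rewrite mem_box.
rewrite (box_prod_sum N (fun a i => r ^ (i ^+ 2 + i) * rho a ^ i)).
apply: ler_prod => a _; rewrite sumr_ge0 ?sumB // => i _.
by rewrite mulr_ge0 ?exprz_ge0 ?ltW.
Qed.

Section ThetaTranslation.
Variables (n : nat) (q qn : C) (mu : 'I_n.-1 -> C).
Hypotheses (n0 : (0 < n)%N) (qnq : qn ^+ n = q) (qn0 : qn != 0) (mu0 : forall a, mu a != 0).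
Local Notation K := {ffun 'I_n.-1 -> int}.

Lemma theta_term_nabla (alpha : 'I_n) (k : 'I_n.-1 -> int) :
  theta_term qn (nabla qn alpha mu) k =
  qn ^ (\sum_b ((2 * n * (val alpha == val b))%:Z - 2) * k b) * theta_term qn mu k.
Proof.
rewrite /theta_term mulrCA; congr (_ * _).
rewrite -prodfXz // -big_split /=; apply: eq_bigr => b _.
by rewrite /nabla expfzMl exprz_exp.
Qed.

Lemma theta_term_nabla_inner (alpha : 'I_n) (a0 : 'I_n.-1) : val a0 = val alpha ->
  forall k : K, q * mu a0 * theta_term qn (nabla qn alpha mu) k =
                theta_term qn mu (k + [ffun a => (a == a0)%:Z]).
Proof.
move=> a0_alpha k; set v := [ffun a => _].
have sum_kv : \sum_a (k + v) a = \sum_a k a + 1.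
  rewrite (eq_bigr (fun a => k a + (if a == a0 then 1 else 0))) => [|a _]; last first.
    by rewrite !ffunE; case: eqP.
  by rewrite big_split /= -big_mkcond big_pred1_eq.
have sqr_kv : \sum_a (k + v) a ^+ 2 = \sum_a k a ^+ 2 + (2 * k a0 + 1).
  rewrite (eq_bigr (fun a => k a ^+ 2 + (if a == a0 then 2 * k a + 1 else 0))) => [|a _].
    by rewrite big_split /= -big_mkcond big_pred1_eq.
  by rewrite !ffunE; case: eqP => _ /=; ring.
have nabla_exp : \sum_b ((2 * n * (val alpha == val b))%:Z - 2) * k b =
                 2 * n%:Z * k a0 - 2 * \sum_b k b.
  rewrite (eq_bigr (fun b => (if b == a0 then 2 * n%:Z * k b else 0) - 2 * k b)) => [|b _].
    by rewrite sumrB -big_mkcond big_pred1_eq mulr_sumr.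
  by rewrite -a0_alpha (inj_eq val_inj) eq_sym; case: eqP => _ /=; rewrite ?muln1 ?muln0; ring.
have mu_kv : \prod_a mu a ^ (k + v) a = mu a0 * \prod_a mu a ^ k a.
  rewrite (eq_bigr (fun a => (if a == a0 then mu a else 1) * mu a ^ k a)) => [|a _].
    by rewrite big_split /= -big_mkcond big_pred1_eq.
  rewrite !ffunE; case: eqP => [->|_] /=; last by rewrite addr0 mul1r.
  by rewrite expfzDr // expr1z mulrC.
rewrite theta_term_nabla /theta_term nabla_exp mu_kv.
have -> : quadA (k + v) + \sum_a (k + v) a =
          n%:Z + (2 * n%:Z * k a0 - 2 * \sum_b k b) + (quadA k + \sum_a k a).
  by rewrite !quadAE sqr_kv sum_kv; ring.
by rewrite !expfzDr // -exprnP qnq; ring.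
Qed.

Lemma theta_term_nabla_last (alpha : 'I_n) : val alpha = n.-1 ->
  forall k : K, (\prod_a mu a)^-1 * theta_term qn (nabla qn alpha mu) k =
                theta_term qn mu (k + [ffun=> -1]).
Proof.
move=> alpha_last k; set v := [ffun=> _].
have n_pred : n%:Z = (n.-1)%:R + 1 by rewrite natz -[1]/(1%:Z) -PoszD addn1 prednK.
have sum_kv : \sum_a (k + v) a = \sum_a k a - (n.-1)%:R.
  rewrite (eq_bigr (fun a => k a - 1)) => [|a _]; last by rewrite !ffunE.
  by rewrite sumrB sumr_const card_ord.
have sqr_kv : \sum_a (k + v) a ^+ 2 = \sum_a k a ^+ 2 - 2 * \sum_a k a + (n.-1)%:R.
  rewrite (eq_bigr (fun a => (k a ^+ 2 - 2 * k a) + 1)) => [|a _]; last first.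
    by rewrite !ffunE; ring.
  by rewrite big_split /= sumrB -mulr_sumr sumr_const card_ord.
have nabla_exp : \sum_b ((2 * n * (val alpha == val b))%:Z - 2) * k b = - 2 * \sum_b k b.
  rewrite mulr_sumr; apply: eq_bigr => b _.
  by rewrite alpha_last eq_sym ltn_eqF //= muln0 sub0r.
have mu_kv : \prod_a mu a ^ (k + v) a = (\prod_a mu a)^-1 * \prod_a mu a ^ k a.
  rewrite -prodfV -big_split /=; apply: eq_bigr => a _.
  by rewrite !ffunE expfzDr // exprN1 mulrC.
rewrite theta_term_nabla /theta_term nabla_exp mu_kv.
have -> : quadA (k + v) + \sum_a (k + v) a = - 2 * \sum_b k b + (quadA k + \sum_a k a).
  by rewrite !quadAE sqr_kv sum_kv n_pred; ring.
by rewrite !expfzDr //; ring.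
Qed.

Lemma theta_term_nabla_translate (alpha : 'I_n) : exists v : K, forall k : K,
  q * mu_full q mu alpha * theta_term qn (nabla qn alpha mu) k = theta_term qn mu (k + v).
Proof.
rewrite /mu_full; case: insubP => [a0 _ a0_alpha | alpha_last].
  by exists [ffun a => (a == a0)%:Z]; exact: theta_term_nabla_inner.
have alpha_n : val alpha = n.-1.
  by apply/eqP; rewrite eqn_leq -ltnS prednK // ltn_ord /= leqNgt.
have q0 : q != 0 by rewrite -qnq expf_neq0.
exists [ffun=> -1] => k; rewrite invfM mulVKf //.
exact: theta_term_nabla_last.
Qed.

End ThetaTranslation.

Lemma theta_box_sumE n (qn : C) (mu : 'I_n.-1 -> C) :
  theta_box_sum qn mu = box_sum (fun k : {ffun 'I_n.-1 -> int} => theta_term qn mu k).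
Proof.
apply: funext => N; apply: eq_bigr => j _.
by congr (theta_term qn mu _); apply: funext => a; rewrite ffunE.
Qed.

Theorem mainTheorem13 (n : nat) (q qn : C) :
  (2 <= n)%N -> 0 < `|q| < 1 -> qn ^+ n = q ->
  forall mu : 'I_n.-1 -> C, (forall a, mu a != 0) ->
    [/\ theta_abs_summable qn mu,
        cvgn (theta_box_sum qn mu) &
        forall alpha : 'I_n,
          q * mu_full q mu alpha * Theta1 qn (nabla qn alpha mu) = Theta1 qn mu].
Proof.
move=> n2 /andP[q0 q1] qnq mu mu0.
have n0 : (0 < n)%N by apply: leq_trans n2.
have qn0 : qn != 0.
  by apply: contraTneq _ q0 => qn_eq0; rewrite -qnq qn_eq0 expr0n (gtn_eqF n0) normr0 ltxx.
have qn01 : 0 < `|qn| < 1.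
  by rewrite normr_gt0 qn0 -(expr_lt1 (n := n)) ?gtn_eqF // -normrX qnq.
have theta_abs (nu : 'I_n.-1 -> C) : (forall a, nu a != 0) -> theta_abs_summable qn nu.
  exact: theta_term_abs_summable n0 qn01.
split; first exact: theta_abs.
  by rewrite theta_box_sumE; apply: box_sum_cvg; exact: theta_abs.
move=> alpha; rewrite /Theta1 !theta_box_sumE.
have nabla0 b : nabla qn alpha mu b != 0 by rewrite mulf_neq0 // expfz_neq0.
have [v shift] := theta_term_nabla_translate n0 qnq qn0 mu0 alpha.
exact: lim_box_sum_translate (theta_abs _ mu0) (theta_abs _ nabla0) shift.
Qed.
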